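(* Let $\mathcal{P}=\mathbb{Z}_{41}\times\mathbb{Z}_{11}$, let $a$ be a primitive element of $\mathbb{Z}_{41}$ and $b$ a primitive element of $\mathbb{Z}_{11}$, and fix $i\in\{1,2,3,4\}$. Define permutations of $\mathcal{P}$ by $\alpha:(e,f)\mapsto(e+1,f)$, $\beta:(e,f)\mapsto(e,f+1)$, $\iota:(e,f)\mapsto(-e,f)$ and $\gamma_i:(e,f)\mapsto(a^8e,b^{2i}f)$. Let $G$ be either $\langle\alpha,\beta,\iota,\gamma_i\rangle$ or $\langle\alpha,\beta,\gamma_i\rangle$. Let $H=\mathrm{AGL}(1,41)\times\mathrm{AGL}(1,11)$ be the group of all permutations of $\mathcal{P}$ of the form $(e,f)\mapsto(ue+s,wf+t)$ with $u\in\mathbb{Z}_{41}\setminus\{0\}$, $s\in\mathbb{Z}_{41}$, $w\in\mathbb{Z}_{11}\setminus\{0\}$, $t\in\mathbb{Z}_{11}$. Then the normaliser of $G$ in $\mathrm{Sym}(\mathcal{P})$ equals $H$. *)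

From mathcomp Require Import all_boot all_order all_algebra all_fingroup.
Set Implicit Arguments. Unset Strict Implicit. Unset Printing Implicit Defensive.
Import GRing.Theory.
Local Open Scope ring_scope.

(* The point set P = Z_41 x Z_11 (41, 11 prime, so 'F_41 = 'Z_41 etc.). *)
Definition Pt : finType := ('F_41 * 'F_11)%type.

(* Turn a function on Pt into a permutation; if it is not injective we
   fall back to the identity (never used: all maps below are bijections
   under the theorem's hypotheses). *)
Definition fperm (f : Pt -> Pt) : {perm Pt} :=
  match injectiveP f with
  | ReflectT inj => perm inj
  | ReflectF _ => 1%g
  end.

Definition alphaP : {perm Pt} := fperm (fun x => (x.1 + 1, x.2)).
Definition betaP  : {perm Pt} := fperm (fun x => (x.1, x.2 + 1)).
Definition iotaP  : {perm Pt} := fperm (fun x => (- x.1, x.2)).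
Definition gammaP (a : 'F_41) (b : 'F_11) (i : nat) : {perm Pt} :=
  fperm (fun x => (a ^+ 8 * x.1, b ^+ (2 * i) * x.2)).

Definition AGLxAGL : {set {perm Pt}} :=
  [set p : {perm Pt} | [exists u : 'F_41, exists s : 'F_41,
     exists w : 'F_11, exists t : 'F_11,
     (u != 0) && (w != 0) &&
     [forall x : Pt, p x == (u * x.1 + s, w * x.2 + t)]]].

From mathcomp Require Import all_boot all_order all_algebra all_fingroup.
From mathcomp Require Import finfield ring.

Set Implicit Arguments.
Unset Strict Implicit.
Unset Printing Implicit Defensive.

Import GRing.Theory.
Local Open Scope ring_scope.

(* A permutation p of the normaliser conjugates alpha, of order 41, and beta, of
   order 11, into G, a subgroup of H.  As 41 and 11 are coprime to 40 and to 10,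
   the orders of the multiplicative groups of F_41 and F_11, elements of H of
   these orders are translations, and since 41 and 11 are units in F_11 and F_41
   we get alpha^p = (e, f) |-> (e + c, f) and beta^p = (e, f) |-> (e, f + d).
   Iterating these identities from p (0, 0) shows that p is affine in each
   coordinate, i.e. p lies in H.  Conversely, H modulo its translations is
   abelian and G contains all translations, so H normalises G. *)

Lemma expf_coprime_eq1 (F : finFieldType) (m : F) n :
  m != 0 -> coprime n #|F|.-1 -> m ^+ n = 1 -> m = 1.
Proof.
move=> m0 co mn1.
have F_gt1 := @card_finNzRing_gt1 F.
have q_gt0 : (0 < #|F|.-1)%N by rewrite -subn1 subn_gt0.
have mq1 : m ^+ #|F|.-1 = 1.
  by apply: (mulIf m0); rewrite mul1r -exprSr prednK ?expf_card // ltnW.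
have [k _] := Bezoutl n q_gt0; rewrite gcdnC (eqP co) => /dvdnP[l Ebez].
have := congr1 (fun e => m ^+ e) Ebez; rewrite /= exprD mulnC exprM mn1 expr1n.
by rewrite mulr1 expr1 mulnC exprM mq1 expr1n.
Qed.

Lemma fpermE (f : Pt -> Pt) : injective f -> fperm f =1 f.
Proof. by rewrite /fperm; case: injectiveP => // f_inj _ x; rewrite permE. Qed.

Definition aff (u s : 'F_41) (w t : 'F_11) : {perm Pt} :=
  fperm (fun x => (u * x.1 + s, w * x.2 + t)).
Arguments aff (u s w t)%_R.

Lemma affE u s w t x : u != 0 -> w != 0 ->
  aff u s w t x = (u * x.1 + s, w * x.2 + t).
Proof.
move=> u0 w0; rewrite fpermE // => -[? ?] [? ?] /= /pair_equal_spec[].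
by move=> /addIr/(mulfI u0) -> /addIr/(mulfI w0) ->.
Qed.

Lemma affM u s w t u' s' w' t' : u != 0 -> w != 0 -> u' != 0 -> w' != 0 ->
  (aff u s w t * aff u' s' w' t')%g = aff (u' * u) (u' * s + s') (w' * w) (w' * t + t').
Proof.
move=> u0 w0 u'0 w'0; apply/permP => x.
by rewrite permM !affE ?mulf_neq0 //= !mulrDr !mulrA !addrA.
Qed.

Lemma aff_inj u s w t u' s' w' t' : u != 0 -> w != 0 -> u' != 0 -> w' != 0 ->
  aff u s w t = aff u' s' w' t' -> [/\ u = u', s = s', w = w' & t = t'].
Proof.
move=> u0 w0 u'0 w'0 E.
have [s_s' t_t'] : s = s' /\ t = t'.
  move: (congr1 (fun g : {perm Pt} => g (0, 0)) E).
  by rewrite !affE //= !mulr0 !add0r => /pair_equal_spec.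
move: (congr1 (fun g : {perm Pt} => g (1, 1)) E); rewrite !affE //= !mulr1 s_s' t_t'.
by move=> /pair_equal_spec[/addIr -> /addIr ->].
Qed.

Lemma aff1 : aff 1 0 1 0 = 1%g.
Proof. by apply/permP => -[e f]; rewrite affE ?oner_eq0 // perm1 !mul1r !addr0. Qed.

Lemma affX u s w t n : u != 0 -> w != 0 ->
  exists s' t', (aff u s w t ^+ n)%g = aff (u ^+ n) s' (w ^+ n) t'.
Proof.
move=> u0 w0; elim: n => [|n [s' [t' IH]]]; first by exists 0, 0; rewrite aff1.
exists (u ^+ n * s + s'), (w ^+ n * t + t').
by rewrite expgS IH affM ?expf_neq0 // -!exprSr.
Qed.

Lemma translX s t n : (aff 1 s 1 t ^+ n)%g = aff 1 (s *+ n) 1 (t *+ n).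
Proof.
elim: n => [|n IH]; first by rewrite !mulr0n aff1.
by rewrite expgS IH affM ?oner_eq0 // !mul1r -!mulrS.
Qed.

Lemma transl_eq1 s t : (aff 1 s 1 t == 1%g) = (s == 0) && (t == 0).
Proof.
rewrite -aff1; apply/eqP/andP => [/aff_inj[]|[/eqP-> /eqP->]] //.
by rewrite ?oner_eq0 // => _ -> _ ->.
Qed.

Lemma Fp_mulrn_eq0 p (x : 'F_p) n : prime p -> ~~ (p %| n)%N -> x *+ n = 0 -> x = 0.
Proof.
move=> p_pr p_n /eqP; rewrite -mulr_natr mulf_eq0 -(dvdn_pcharf (pchar_Fp p_pr)).
by rewrite (negbTE p_n) orbF => /eqP.
Qed.

Lemma AGLxAGLP p :
  reflect (exists u s w t, [/\ u != 0, w != 0 & p = aff u s w t]) (p \in AGLxAGL).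
Proof.
rewrite inE; apply: (iffP existsP) => [[u /existsP[s /existsP[w /existsP[t]]]]|].
  case/andP=> /andP[u0 w0] /forallP Ep; exists u, s, w, t; split => //.
  by apply/permP => x; rewrite affE // (eqP (Ep x)).
move=> [u [s [w [t [u0 w0 ->]]]]]; exists u.
apply/existsP; exists s; apply/existsP; exists w; apply/existsP; exists t.
by rewrite u0 w0; apply/forallP => x; rewrite affE.
Qed.

Lemma aff_AGLxAGL u s w t : u != 0 -> w != 0 -> aff u s w t \in AGLxAGL.
Proof. by move=> u0 w0; apply/AGLxAGLP; exists u, s, w, t. Qed.

Lemma AGLxAGL_group_set : group_set AGLxAGL.
Proof.
apply/group_setP; split; first by rewrite -aff1 aff_AGLxAGL ?oner_eq0.
move=> _ _ /AGLxAGLP[u [s [w [t [u0 w0 ->]]]]] /AGLxAGLP[u' [s' [w' [t' [u'0 w'0 ->]]]]].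
by rewrite affM // aff_AGLxAGL ?mulf_neq0.
Qed.

Canonical AGLxAGL_group := Group AGLxAGL_group_set.

(* Linear parts in H commute, so conjugation by H only changes the translation part. *)
Lemma AGLxAGL_conjg g q : g \in AGLxAGL -> q \in AGLxAGL ->
  exists s t, (g ^ q)%g = (g * aff 1 s 1 t)%g.
Proof.
move=> /AGLxAGLP[u [s [w [t [u0 w0 ->]]]]] /AGLxAGLP[u' [s' [w' [t' [u'0 w'0 ->]]]]].
exists (u' * s + s' - u * s' - s), (w' * t + t' - w * t' - t).
apply: (mulgI (aff u' s' w' t')); rewrite -conjgC !affM ?mulf_neq0 ?oner_eq0 //.
by congr aff; ring.
Qed.

Lemma AGLxAGL_coprime_order g n : g \in AGLxAGL -> (g ^+ n = 1)%g ->
  coprime n 40 -> coprime n 10 ->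
  exists s t, [/\ g = aff 1 s 1 t, s *+ n = 0 & t *+ n = 0].
Proof.
move=> /AGLxAGLP[u [s [w [t [u0 w0 ->]]]]] gn1 co40 co10.
have [s' [t' gnE]] := affX s t n u0 w0.
have [un1 _ wn1 _] : [/\ u ^+ n = 1, s' = 0, w ^+ n = 1 & t' = 0].
  by apply: aff_inj; rewrite ?expf_neq0 ?oner_eq0 // aff1 -gnE.
have u1 : u = 1 by apply: expf_coprime_eq1 un1; rewrite ?card_Fp.
have w1 : w = 1 by apply: expf_coprime_eq1 wn1; rewrite ?card_Fp.
move: gn1; rewrite u1 w1 translX -aff1 => /aff_inj[]; rewrite ?oner_eq0 // => _ sn0 _ tn0.
by exists s, t.
Qed.

Lemma alphaE : alphaP = aff 1 1 1 0.
Proof.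
apply/permP => x; rewrite affE ?oner_eq0 // fpermE ?mul1r ?addr0 //.
by move=> [? ?] [? ?] /= /pair_equal_spec[/addIr -> ->].
Qed.

Lemma betaE : betaP = aff 1 0 1 1.
Proof.
apply/permP => x; rewrite affE ?oner_eq0 // fpermE ?mul1r ?addr0 //.
by move=> [? ?] [? ?] /= /pair_equal_spec[-> /addIr ->].
Qed.

Lemma iotaE : iotaP = aff (-1) 0 1 0.
Proof.
apply/permP => x; rewrite affE ?oppr_eq0 ?oner_eq0 // fpermE ?mulN1r ?mul1r ?addr0 //.
by move=> [? ?] [? ?] /= /pair_equal_spec[/oppr_inj -> ->].
Qed.

Lemma gammaE a b i : a != 0 -> b != 0 ->
  gammaP a b i = aff (a ^+ 8) 0 (b ^+ (2 * i)) 0.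
Proof.
move=> a0 b0; apply/permP => x; rewrite affE ?expf_neq0 // fpermE ?addr0 //.
move=> [? ?] [? ?] /= /pair_equal_spec[].
by move=> /(mulfI (expf_neq0 _ a0)) -> /(mulfI (expf_neq0 _ b0)) ->.
Qed.

Lemma transl_mem (G : {group {perm Pt}}) s t :
  alphaP \in G -> betaP \in G -> aff 1 s 1 t \in G.
Proof.
move=> aG bG; rewrite -(natr_Zp s) -(natr_Zp t).
have -> : aff 1 s%:R 1 t%:R = (alphaP ^+ s * betaP ^+ t)%g.
  by rewrite alphaE betaE !translX affM ?oner_eq0 // !mul1r !mul0rn addr0 add0r.
by rewrite groupM ?groupX.
Qed.

Lemma transl_equivariantE (p : {perm Pt}) (c : 'F_41) (d : 'F_11) :
  (forall x, p (x.1 + 1, x.2) = ((p x).1 + c, (p x).2)) ->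
  (forall x, p (x.1, x.2 + 1) = ((p x).1, (p x).2 + d)) ->
  forall x, p x = (c * x.1 + (p (0, 0)).1, d * x.2 + (p (0, 0)).2).
Proof.
move=> p_alpha p_beta.
have p1 f n : p (n%:R, f) = ((p (0, f)).1 + c * n%:R, (p (0, f)).2).
  elim: n => [|n IH]; first by rewrite mulr0 addr0; case: (p _).
  by rewrite mulrSr (p_alpha (n%:R, f)) IH mulrDr mulr1 addrA.
have p2 e n : p (e, n%:R) = ((p (e, 0)).1, (p (e, 0)).2 + d * n%:R).
  elim: n => [|n IH]; first by rewrite mulr0 addr0; case: (p _).
  by rewrite mulrSr (p_beta (e, n%:R)) IH mulrDr mulr1 addrA.
move=> [e f]; rewrite -[f]natr_Zp p2 -[e]natr_Zp p1 /= !natr_Zp.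
by rewrite addrC [d * _ + _]addrC.
Qed.

Lemma AGLxAGL_sub_norm (G : {group {perm Pt}}) :
  alphaP \in G -> betaP \in G -> G \subset AGLxAGL -> AGLxAGL \subset 'N(G)%g.
Proof.
move=> aG bG /subsetP GH; apply/subsetP => q qH; rewrite inE.
apply/subsetP => _ /imsetP[g gG ->].
have [s [t ->]] := AGLxAGL_conjg (GH g gG) qH.
by rewrite groupM ?transl_mem.
Qed.

Lemma alpha_order : (alphaP ^+ 41 = 1)%g.
Proof. by rewrite alphaE translX mul0rn (@pchar_Fp_0 41) // aff1. Qed.

Lemma beta_order : (betaP ^+ 11 = 1)%g.
Proof. by rewrite betaE translX mul0rn (@pchar_Fp_0 11) // aff1. Qed.

Lemma norm_sub_AGLxAGL (G : {group {perm Pt}}) :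
  alphaP \in G -> betaP \in G -> G \subset AGLxAGL -> 'N(G)%g \subset AGLxAGL.
Proof.
move=> aG bG GH; apply/subsetP => p pN.
have conj_H g : g \in G -> (g ^ p)%g \in AGLxAGL.
  by move=> gG; rewrite (subsetP GH) ?memJ_norm.
have alphaJ_order : ((alphaP ^ p) ^+ 41 = 1)%g by rewrite -conjXg alpha_order conj1g.
have betaJ_order : ((betaP ^ p) ^+ 11 = 1)%g by rewrite -conjXg beta_order conj1g.
have [c [t [Eac _ /Fp_mulrn_eq0 t0]]] :=
  AGLxAGL_coprime_order (conj_H _ aG) alphaJ_order isT isT.
have [s [d [Ebd /Fp_mulrn_eq0 s0 _]]] :=
  AGLxAGL_coprime_order (conj_H _ bG) betaJ_order isT isT.
rewrite t0 // in Eac; rewrite s0 // in Ebd.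
have c0 : c != 0.
  by move: (conjg_eq1 alphaP p); rewrite Eac alphaE !transl_eq1 oner_eq0 !andbT => ->.
have d0 : d != 0.
  by move: (conjg_eq1 betaP p); rewrite Ebd betaE !transl_eq1 eqxx oner_eq0 /= => ->.
have p_alpha (x : Pt) : p (x.1 + 1, x.2) = ((p x).1 + c, (p x).2).
  have := congr1 (fun g : {perm Pt} => g x) (conjgC alphaP p).
  by rewrite Eac /= !permM alphaE !affE ?oner_eq0 // !mul1r !addr0.
have p_beta (x : Pt) : p (x.1, x.2 + 1) = ((p x).1, (p x).2 + d).
  have := congr1 (fun g : {perm Pt} => g x) (conjgC betaP p).
  by rewrite Ebd /= !permM betaE !affE ?oner_eq0 // !mul1r !addr0.
apply/AGLxAGLP; exists c, (p (0, 0)).1, d, (p (0, 0)).2; split=> //.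
by apply/permP => x; rewrite affE // (transl_equivariantE p_alpha p_beta).
Qed.

Lemma norm_AGLxAGL (G : {group {perm Pt}}) :
  alphaP \in G -> betaP \in G -> G \subset AGLxAGL -> 'N(G)%g = AGLxAGL.
Proof.
move=> aG bG GH; apply/eqP.
by rewrite eqEsubset norm_sub_AGLxAGL ?AGLxAGL_sub_norm.
Qed.

Theorem lemma5p1 (a : 'F_41) (b : 'F_11) (i : nat)
  (ha : 40.-primitive_root a) (hb : 10.-primitive_root b)
  (hi : (1 <= i <= 4)%N) (G : {set {perm Pt}}) :
  G = <<[set alphaP; betaP; iotaP; gammaP a b i]>>%g \/
  G = <<[set alphaP; betaP; gammaP a b i]>>%g ->
  'N(G)%g = AGLxAGL.
Proof.
have a0 : a != 0 by have := oner_neq0 'F_41; rewrite -(prim_expr_order ha) expf_eq0.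
have b0 : b != 0 by have := oner_neq0 'F_11; rewrite -(prim_expr_order hb) expf_eq0.
have alphaH : alphaP \in AGLxAGL by rewrite alphaE aff_AGLxAGL ?oner_eq0.
have betaH : betaP \in AGLxAGL by rewrite betaE aff_AGLxAGL ?oner_eq0.
have iotaH : iotaP \in AGLxAGL by rewrite iotaE aff_AGLxAGL ?oppr_eq0 ?oner_eq0.
have gammaH : gammaP a b i \in AGLxAGL by rewrite gammaE // aff_AGLxAGL ?expf_neq0.
by case=> ->; apply: norm_AGLxAGL;
  rewrite ?mem_gen ?inE ?eqxx ?orbT // gen_subG !subUset !sub1set alphaH betaH gammaH ?iotaH.
Qed.
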